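(* In the reward-seeking setting, for every instance and every $b>1$, the naive agent with present-bias parameter $b$ satisfies $b\cdot R_n(s)\ge R_o(s)$; that is, its reward ratio is at most $b$.
   Context: Reward-seeking instance: a finite directed acyclic graph $G=(V,E)$ with nonnegative edge rewards $r(u,v)$, start node $s$ and target node $t$, where $t$ is the unique node with no outgoing edges; the agent must travel from $s$ to $t$ and wishes to collect as much reward as possible. $R_o(u)$ is the maximum total reward of a $u$–$t$ path. The naive agent with bias $b$: $R_n(t)=0$, and for $u\ne t$, $S^{(R)}_n(u)\in\arg\max_{v:(u,v)\in E}\big(b\cdot r(u,v)+R_o(v)\big)$ and $R_n(u)=r(u,S^{(R)}_n(u))+R_n(S^{(R)}_n(u))$; $R_n(s)$ is the reward it collects. The reward ratio is $R_o(s)/R_n(s)$. *)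

From mathcomp Require Import all_boot all_order all_algebra.
Set Implicit Arguments. Unset Strict Implicit. Unset Printing Implicit Defensive.
Import Order.TTheory GRing.Theory Num.Theory.
Local Open Scope ring_scope.

Definition acyclic (V : finType) (E : rel V) : Prop :=
  forall (x : V) (p : seq V), path E x p -> last x p = x -> p = [::].

Definition is_path_to (V : finType) (E : rel V) (t u : V) (p : seq V) : bool :=
  path E u p && (last u p == t).

Definition path_reward (V : finType) (R : numDomainType) (r : V -> V -> R)
    (u : V) (p : seq V) : R :=
  \sum_(e <- zip (u :: p) p) r e.1 e.2.

Definition is_max_reward (V : finType) (R : numDomainType) (E : rel V)
    (r : V -> V -> R) (t u : V) (x : R) : Prop :=
  (exists p, is_path_to E t u p /\ path_reward r u p = x) /\
  (forall p, is_path_to E t u p -> path_reward r u p <= x).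

From mathcomp Require Import all_boot all_order all_algebra.
Set Implicit Arguments. Unset Strict Implicit. Unset Printing Implicit Defensive.
Import Order.TTheory GRing.Theory Num.Theory.
Local Open Scope ring_scope.

(* Call a vertex bad if b * Rn u < Ro u.  The sink t is not bad, and if u is
   bad then so is the naive agent's choice S u: with v the first step of an
   optimal u-t path, Ro u <= r u v + Ro v <= b r u v + Ro v, which the agent's
   choice bounds by b r u (S u) + Ro (S u); were S u good, this would be at
   most b (r u (S u) + Rn (S u)) = b Rn u.  So the agent's walk from a bad
   vertex never ends, which is impossible in a finite acyclic graph. *)

Section SuccessorClosedPredicate.

Variables (V : finType) (E : rel V) (S : V -> V) (P : pred V).
Hypothesis edge_succ : forall x, P x -> E x (S x).
Hypothesis P_succ : forall x, P x -> P (S x).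

Lemma iter_succ_closed k x : P x -> P (iter k S x).
Proof. by move=> Px; elim: k => //= k; apply: P_succ. Qed.

Lemma path_traject_succ n x : P x -> path E x (traject S (S x) n).
Proof.
elim: n x => //= n IHn x Px.
by rewrite edge_succ //= IHn ?P_succ.
Qed.

Lemma acyclic_succ_closed_pred0 : acyclic E -> forall x, ~~ P x.
Proof.
move=> acyclicE x; apply/negP => Px.
have /trajectP[i lt_i_order iter_order_i] := looping_order S x.
set y := iter i S x in iter_order_i.
have loop_y : iter (order S x - i) S y = y.
  by rewrite -iterD subnK ?(ltnW lt_i_order).
have := acyclicE y _ (path_traject_succ (order S x - i) (iter_succ_closed i Px)).
rewrite last_traject loop_y => /(_ erefl) /(congr1 size).
by rewrite size_traject => /eqP; rewrite subn_eq0 leqNgt lt_i_order.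
Qed.

End SuccessorClosedPredicate.

Section MaxReward.

Variables (V : finType) (R : numDomainType) (E : rel V) (r : V -> V -> R).
Variables (t : V) (Ro : V -> R).
Hypothesis Ro_max : forall u, is_max_reward E r t u (Ro u).

Lemma max_reward_sink : (forall v, ~~ E t v) -> Ro t = 0.
Proof.
move=> sink_t; have [[[|v p] [/andP[path_p _] <-]] _] := Ro_max t.
  by rewrite /path_reward big_nil.
by move: path_p; rewrite /= (negbTE (sink_t v)).
Qed.

Lemma max_reward_first_edge u :
  u != t -> exists2 v, E u v & Ro u <= r u v + Ro v.
Proof.
move=> u_neq_t; have [[[|v p] [/andP[path_p last_p] <-]] _] := Ro_max u.
  by move: last_p u_neq_t => /= /eqP ->; rewrite eqxx.
case/andP: path_p => Euv path_p; exists v => //.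
rewrite /path_reward /= big_cons lerD2l.
by apply: (proj2 (Ro_max v)); apply/andP.
Qed.

End MaxReward.

Lemma biased_choice_bound (R : numDomainType) (b ruv Rov ruS RoS RnS Rou : R) :
  1 <= b -> 0 <= ruv -> Rou <= ruv + Rov ->
  b * ruv + Rov <= b * ruS + RoS -> RoS <= b * RnS ->
  Rou <= b * (ruS + RnS).
Proof.
move=> b_ge1 ruv_ge0 Rou_le choice_le RoS_le.
apply: (le_trans Rou_le); apply: (le_trans _ (le_trans choice_le _)).
  by rewrite lerD2r ler_peMl.
by rewrite mulrDr lerD2l.
Qed.

Theorem claim5 (R : realFieldType) (V : finType) (E : rel V)
    (r : V -> V -> R) (s t : V) (b : R) :
  acyclic E ->
  (forall u v, E u v -> 0 <= r u v) ->
  (forall u, (forall v, ~~ E u v) <-> u = t) ->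
  1 < b ->
  forall Ro : V -> R, (forall u, is_max_reward E r t u (Ro u)) ->
  forall S : V -> V,
    (forall u, u != t ->
       E u (S u) /\
       (forall v, E u v -> b * r u v + Ro v <= b * r u (S u) + Ro (S u))) ->
  forall Rn : V -> R,
    Rn t = 0 ->
    (forall u, u != t -> Rn u = r u (S u) + Rn (S u)) ->
  Ro s <= b * Rn s.
Proof.
move=> acyclicE r_ge0 sinkP b_gt1 Ro Ro_max S S_choice Rn Rn_t Rn_step.
have Ro_t : Ro t = 0 by apply: (max_reward_sink Ro_max); apply/sinkP.
pose bad u := b * Rn u < Ro u.
have bad_neq_t u : bad u -> u != t.
  by apply: contraTneq => ->; rewrite /bad Rn_t Ro_t mulr0 ltxx.
have bad_edge u : bad u -> E u (S u) by move/bad_neq_t/S_choice => [].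
have bad_succ u : bad u -> bad (S u).
  move=> bad_u; have u_neq_t := bad_neq_t u bad_u.
  have [_ choice_le] := S_choice u u_neq_t.
  have [v Euv Ro_u_le] := max_reward_first_edge Ro_max u_neq_t.
  rewrite /bad ltNge; apply: contraTN bad_u => good_Su.
  rewrite /bad -leNgt Rn_step //.
  exact: biased_choice_bound (ltW b_gt1) (r_ge0 _ _ Euv) Ro_u_le
                             (choice_le v Euv) good_Su.
have := acyclic_succ_closed_pred0 bad_edge bad_succ acyclicE s.
by rewrite /bad -leNgt.
Qed.
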